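(* Let $\mathcal{G}=(V,E)$ be an $m$-uniform connected hypergraph with $m>2$ on $n$ vertices, with maximum degree $d_{\max}$ and minimum degree $d_{\min}$. Then $$\lambda_n(L_{\mathcal{G}})\le\frac{2d_{\max}(m-1)-1+\sqrt{4(m-1)^2d_{\max}^2|E|^2-2d_{\min}(m-1)+1}}{2(m-1)}.$$
   Context: A hypergraph $\mathcal{G}=(V,E)$ has a finite vertex set $V$ and a set $E$ of subsets of $V$ (edges); it is $m$-uniform if every edge has exactly $m$ vertices. The degree $d_i$ is the number of edges containing $i$, and for distinct $i,j$ the codegree $d_{ij}$ is the number of edges containing both. The Laplacian $L_{\mathcal{G}}$ has $(L_{\mathcal{G}})_{ii}=d_i$ and $(L_{\mathcal{G}})_{ij}=-d_{ij}/(m-1)$ for $i\ne j$; $\lambda_n(L_{\mathcal{G}})$ is its largest eigenvalue. *)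

From HB Require Import structures.
From mathcomp Require Import all_boot all_order all_algebra.
Set Implicit Arguments. Unset Strict Implicit. Unset Printing Implicit Defensive.
Import Order.TTheory GRing.Theory Num.Theory.
Local Open Scope ring_scope.

Definition uniform (n m : nat) (E : {set {set 'I_n}}) : Prop :=
  forall e, e \in E -> #|e| = m.

Definition hdeg (n : nat) (E : {set {set 'I_n}}) (i : 'I_n) : nat :=
  #|[set e in E | i \in e]|.

Definition hcodeg (n : nat) (E : {set {set 'I_n}}) (i j : 'I_n) : nat :=
  #|[set e in E | (i \in e) && (j \in e)]|.

Definition dmax (n : nat) (E : {set {set 'I_n}}) : nat :=
  \max_(i : 'I_n) hdeg E i.

(* minimum degree (the default dmax is only used when n = 0) *)
Definition dmin (n : nat) (E : {set {set 'I_n}}) : nat :=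
  \big[minn/dmax E]_(i : 'I_n) hdeg E i.

Definition hadj (n : nat) (E : {set {set 'I_n}}) : rel 'I_n :=
  fun u v => [exists e in E, (u \in e) && (v \in e)].

Definition hconnected (n : nat) (E : {set {set 'I_n}}) : Prop :=
  forall u v : 'I_n, connect (hadj E) u v.

Definition hlaplacian (R : fieldType) (n m : nat) (E : {set {set 'I_n}})
  : 'M[R]_n :=
  \matrix_(i, j) (if i == j then (hdeg E i)%:R
                  else - ((hcodeg E i j)%:R / (m.-1)%:R)).

From HB Require Import structures.
From mathcomp Require Import all_boot all_order all_algebra.
From mathcomp Require Import ring lra.
Set Implicit Arguments. Unset Strict Implicit. Unset Printing Implicit Defensive.
Import Order.TTheory GRing.Theory Num.Theory.
Local Open Scope ring_scope.

(* Apply Gershgorin's theorem to the columns of the Laplacian: the codegrees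
   d_ip (i <> p) sum to (m-1) d_p, so the off-diagonal part of column p has
   absolute sum d_p and every eigenvalue is at most 2 d_p <= 2 d_max.  As soon
   as |E| >= 2 the square root in the bound exceeds 2 (m-1) d_max + 1, so the
   bound is at least 2 d_max.  For a single edge the bound is below 2, but
   there the spectrum is {0, m/(m-1)}, which can be computed directly. *)

Lemma card_set_in_sum (T : finType) (A : {set T}) (P : pred T) :
  #|[set x in A | P x]| = (\sum_(x in A) P x)%N.
Proof.
rewrite -sum1_card big_mkcond [RHS]big_mkcond /=.
by apply: eq_bigr => x _; rewrite inE; case: (x \in A); case: (P x).
Qed.

Section Degrees.

Variables (n : nat) (E : {set {set 'I_n}}).

Lemma hcodegii (p : 'I_n) : hcodeg E p p = hdeg E p.
Proof. by apply: eq_card => e; rewrite !inE andbb. Qed.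

Lemma sum_hcodeg m (p : 'I_n) :
  uniform m E -> (\sum_i hcodeg E i p = m * hdeg E p)%N.
Proof.
move=> Eu; rewrite /hdeg card_set_in_sum big_distrr /=.
under eq_bigr do rewrite /hcodeg card_set_in_sum.
rewrite exchange_big /=; apply: eq_bigr => e eE.
rewrite -(Eu e eE) -sum1_card big_distrl [RHS]big_mkcond /=.
by apply: eq_bigr => i _; case: (i \in e); case: (p \in e).
Qed.

Lemma sum_hcodeg_neq m (p : 'I_n) :
  uniform m E -> (\sum_(i | i != p) hcodeg E i p = m.-1 * hdeg E p)%N.
Proof.
move=> Eu; have := sum_hcodeg p Eu.
by rewrite (bigD1 p) //= hcodegii -subn1 mulnBl mul1n => <-; rewrite addKn.
Qed.

Lemma hdeg_le_dmax (i : 'I_n) : (hdeg E i <= dmax E)%N.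
Proof. exact: leq_bigmax. Qed.

Lemma dmin_le_dmax : (dmin E <= dmax E)%N.
Proof.
rewrite /dmin; elim/big_ind: _ => // [x y|i _]; last exact: hdeg_le_dmax.
by rewrite geq_min => ->.
Qed.

Lemma dmax_le_card : (dmax E <= #|E|)%N.
Proof.
apply/bigmax_leqP => i _.
by apply/subset_leq_card/subsetP => e; rewrite inE => /andP[].
Qed.

Lemma hdeg_set1 (e : {set 'I_n}) (i : 'I_n) : hdeg [set e] i = (i \in e) :> nat.
Proof. by rewrite /hdeg card_set_in_sum big_set1. Qed.

Lemma hcodeg_set1 (e : {set 'I_n}) (i j : 'I_n) :
  hcodeg [set e] i j = (i \in e) && (j \in e) :> nat.
Proof. by rewrite /hcodeg card_set_in_sum big_set1. Qed.

End Degrees.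

Lemma eigenvalue_gershgorin (R : realFieldType) n (A : 'M[R]_n) (lam : R) :
  eigenvalue A lam -> exists p, `|lam - A p p| <= \sum_(i | i != p) `|A i p|.
Proof.
case/eigenvalueP => v vA /rV0Pn[j vj0].
have [p _ vp_max] := @arg_maxP _ _ _ j xpredT (fun i => `|v 0 i|) isT.
exists p; set vp := v 0 p.
have vp_gt0 : 0 < `|vp| by apply: lt_le_trans (vp_max j isT); rewrite normr_gt0.
have col_p : (lam - A p p) * vp = \sum_(i | i != p) v 0 i * A i p.
  have := congr1 (fun u : 'rV_n => u 0 p) vA; rewrite !mxE (bigD1 p) //= -/vp.
  by rewrite mulrBl [A p p * _]mulrC [lam * _]mulrC => <-; rewrite addrAC subrr add0r.
suff : `|lam - A p p| * `|vp| <= (\sum_(i | i != p) `|A i p|) * `|vp|.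
  by rewrite ler_pM2r.
rewrite -normrM col_p mulr_suml.
apply: le_trans (ler_norm_sum _ _ _) _; apply: ler_sum => i _.
by rewrite normrM mulrC; apply: ler_wpM2l; [exact: normr_ge0 | exact: vp_max].
Qed.

Section LaplacianSpectrum.

Variables (R : realFieldType) (n m : nat) (E : {set {set 'I_n}}).
Hypothesis m_gt1 : (1 < m)%N.

Let k_gt0 : 0 < (m.-1)%:R :> R.
Proof. by rewrite ltr0n -ltnS prednK // ltnW. Qed.

Lemma sum_hlaplacian_neq (p : 'I_n) : uniform m E ->
  \sum_(i | i != p) `|hlaplacian R m E i p| = (hdeg E p)%:R.
Proof.
move=> Eu; under eq_bigr => i /negbTE ip.
  rewrite mxE ip normrN ger0_norm ?divr_ge0 ?ler0n //.
over.
rewrite -mulr_suml -natr_sum (sum_hcodeg_neq p Eu) natrM mulrAC divff ?mul1r //.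
exact: lt0r_neq0.
Qed.

Lemma eigenvalue_hlaplacian_le (lam : R) : uniform m E ->
  eigenvalue (hlaplacian R m E) lam -> lam <= 2 * (dmax E)%:R.
Proof.
move=> Eu /eigenvalue_gershgorin[p]; rewrite sum_hlaplacian_neq // mxE eqxx.
have := ler_norm (lam - (hdeg E p)%:R).
have : (hdeg E p)%:R <= (dmax E)%:R :> R by rewrite ler_nat hdeg_le_dmax.
lra.
Qed.

End LaplacianSpectrum.

Section SingleEdge.

Variables (R : numFieldType) (n m : nat) (e : {set 'I_n}).
Hypotheses (m_gt1 : (1 < m)%N) (card_e : #|e| = m).

Local Notation k := (m.-1)%:R.

Let k_neq0 : k != 0 :> R.
Proof. by rewrite pnatr_eq0 -lt0n -ltnS prednK // ltnW. Qed.

Let natr_m : m%:R = k + 1 :> R.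
Proof. by rewrite natr1 prednK // ltnW. Qed.

Lemma hlaplacian_set1E (i j : 'I_n) : hlaplacian R m [set e] i j
  = (j \in e)%:R / k * (m%:R * (i == j)%:R - (i \in e)%:R).
Proof.
rewrite mxE hdeg_set1 hcodeg_set1 natr_m.
have [<-|ij] := eqVneq i j; case: (i \in e); rewrite ?(negbTE ij) //=;
  by case: (j \in e); rewrite /=; field.
Qed.

Lemma eigenvalue_hlaplacian_set1 (lam : R) :
  eigenvalue (hlaplacian R m [set e]) lam -> lam = 0 \/ lam = m%:R / k.
Proof.
case/eigenvalueP => v vL /rV0Pn[j vj0].
set s := \sum_(i in e) v 0 i.
have col q : lam * v 0 q = (q \in e)%:R / k * (m%:R * v 0 q - s).
  have := congr1 (fun u : 'rV_n => u 0 q) vL; rewrite !mxE => <-.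
  under eq_bigr do rewrite hlaplacian_set1E mulrCA mulrBr mulrCA.
  rewrite -mulr_sumr sumrB -mulr_sumr (bigD1 q) //= eqxx mulr1 big1 ?addr0.
    congr (_ * (_ - _)); rewrite /s [RHS]big_mkcond; apply: eq_bigr => i _.
    by case: (i \in e); rewrite ?mulr1 ?mulr0.
  by move=> i /negbTE ->; rewrite mulr0.
have lam_s : lam * s = 0.
  rewrite /s mulr_sumr; under eq_bigr => i ie do rewrite col ie.
  rewrite -mulr_sumr sumrB -mulr_sumr sumr_const card_e -/s.
  by rewrite [m%:R * s]mulr_natl subrr mulr0.
have [->|lam_neq0] := eqVneq lam 0; [by left | right].
have s0 : s = 0 by move/eqP: lam_s; rewrite mulf_eq0 (negbTE lam_neq0) => /eqP.
move: (col j); rewrite s0 subr0; case: (j \in e) => /=.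
  by rewrite mulrA => /(mulIf vj0) ->; rewrite mul1r mulrC.
by rewrite !mul0r => /eqP; rewrite mulf_eq0 (negbTE lam_neq0) (negbTE vj0).
Qed.

Lemma eigenvalue_hlaplacian_set1_le (lam : R) :
  eigenvalue (hlaplacian R m [set e]) lam -> lam <= m%:R / k.
Proof.
case/eigenvalue_hlaplacian_set1 => -> //.
by rewrite divr_ge0 ?ler0n.
Qed.

End SingleEdge.

Section SpectralBound.

Variable R : rcfType.

(* k = m - 1, D = d_max, dm = d_min, N = |E| *)
Definition spectral_bound (k D dm N : R) : R :=
  (2 * D * k - 1 + Num.sqrt (4 * k ^+ 2 * D ^+ 2 * N ^+ 2 - 2 * dm * k + 1))
  / (2 * k).

Lemma le_sqrt_of_sqr (a x : R) : 0 <= a -> a ^+ 2 <= x -> a <= Num.sqrt x.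
Proof. by move=> a_ge0 /ler_wsqrtr; rewrite sqrtr_sqr ger0_norm. Qed.

Variables (k D dm N : R).

Lemma spectral_bound_ge_2D : 1 <= k -> 0 <= dm <= D ->
  D = 0 \/ 1 <= D /\ 2 <= N -> 2 * D <= spectral_bound k D dm N.
Proof.
move=> k_ge1 /andP[dm_ge0 dm_le_D] D_cases; rewrite ler_pdivlMr; last by lra.
suff : 2 * D * k + 1 <= Num.sqrt (4 * k ^+ 2 * D ^+ 2 * N ^+ 2 - 2 * dm * k + 1).
  lra.
case: D_cases => [D0|[D_ge1 N_ge2]].
  have -> : dm = 0 by apply: le_anti; rewrite dm_ge0 -D0 dm_le_D.
  by rewrite D0 !(mul0r, mulr0, expr0n) subr0 add0r sqrtr1.
apply: le_sqrt_of_sqr; first by nra.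
have kD_ge1 : 1 <= k * D by nra.
have dmk_le_Dk : dm * k <= D * k by rewrite ler_wpM2r //; lra.
have N2_ge4 : 4 <= N ^+ 2 by nra.
have := ler_wpM2l (sqr_ge0 (k * D)) N2_ge4.
rewrite exprMn; nra.
Qed.

Lemma spectral_bound_ge_single_edge : 2 <= k -> dm <= D -> 1 <= D -> 1 <= N ->
  (k + 1) / k <= spectral_bound k D dm N.
Proof.
move=> k_ge2 dm_le_D D_ge1 N_ge1; rewrite ler_pdivlMr; last by lra.
suff : 3 <= Num.sqrt (4 * k ^+ 2 * D ^+ 2 * N ^+ 2 - 2 * dm * k + 1).
  have -> : (k + 1) / k * (2 * k) = 2 * k + 2 by field; lra.
  nra.
apply: le_sqrt_of_sqr => //.
have kD_ge2 : 2 <= k * D by nra.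
have dmk_le_Dk : dm * k <= D * k by rewrite ler_wpM2r //; lra.
have N2_ge1 : 1 <= N ^+ 2 by nra.
have := ler_wpM2l (sqr_ge0 (k * D)) N2_ge1.
rewrite exprMn; nra.
Qed.

End SpectralBound.

Theorem corollary6 (R : rcfType) (n m : nat) (E : {set {set 'I_n}}) :
  (2 < m)%N -> uniform m E -> hconnected E ->
  forall lambda : R, eigenvalue (hlaplacian R m E) lambda ->
  lambda <= ((2 * (dmax E) * m.-1)%:R - 1
             + Num.sqrt (4%:R * (m.-1)%:R ^+ 2 * (dmax E)%:R ^+ 2 * (#|E|)%:R ^+ 2
                         - 2%:R * (dmin E)%:R * (m.-1)%:R + 1))
            / (2 * m.-1)%:R.
Proof.
move=> m_gt2 Eu _ lam eig.
rewrite !natrM -/(spectral_bound _ _ _ _).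
have m_gt1 : (1 < m)%N by exact: ltnW.
have k_ge2 : 2 <= (m.-1)%:R :> R by rewrite (ler_nat R 2) -ltnS prednK // ltnW.
have dm_le_D : (dmin E)%:R <= (dmax E)%:R :> R by rewrite ler_nat dmin_le_dmax.
have [/cards1P[e E1] | E_neq1] := boolP (#|E| == 1%N).
  subst E.
  have card_e : #|e| = m := Eu e (set11 e).
  have [i ie] : exists i, i \in e by apply/card_gt0P; rewrite card_e ltnW.
  have D_ge1 : 1 <= (dmax [set e])%:R :> R.
    by rewrite (ler_nat R 1); apply: leq_trans (hdeg_le_dmax _ i); rewrite hdeg_set1 ie.
  have N_ge1 : 1 <= (#|[set e]|)%:R :> R by rewrite cards1.
  apply: le_trans (spectral_bound_ge_single_edge k_ge2 dm_le_D D_ge1 N_ge1).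
  rewrite natr1 prednK ?(ltnW m_gt1) //.
  by have := eigenvalue_hlaplacian_set1_le m_gt1 card_e eig.
apply: le_trans (eigenvalue_hlaplacian_le m_gt1 Eu eig) _.
apply: spectral_bound_ge_2D; [lra | by rewrite ler0n dm_le_D |].
have [->|D_neq0] := eqVneq (dmax E) 0%N; [by left | right].
have E_gt1 : (1 < #|E|)%N.
  by rewrite ltn_neqAle eq_sym E_neq1 (leq_trans _ (dmax_le_card E)) ?lt0n.
by split; [rewrite (ler_nat R 1) lt0n | rewrite (ler_nat R 2)].
Qed.
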